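(* Let $G$ be a basic graph with no induced $P_7$, $C_4$, $C_6$ or $C_7$, and let $H=(B_1,\dots,B_5)$ be a maximal nice blowup of $C_5$ in $G$. Then every vertex of $V(G)\setminus V(H)$ has a neighbor in $V(H)$ (i.e. $A_0=\emptyset$).
   Context: Indices modulo $5$. A nice blowup of $C_5$ is a tuple $(B_1,\dots,B_5)$ of pairwise disjoint cliques of $G$ such that every vertex of $B_i$ has a neighbor in $B_{i-1}$ and in $B_{i+1}$, $B_i$ is anticomplete to $B_{i+2}$, and there are no $a\in B_i$, distinct $b,c\in B_{i+1}$, $d\in B_{i+2}$ with $G[\{a,b,c,d\}]\cong P_4$; $V(H)=\bigcup B_i$; it is maximal if no nice blowup has vertex set strictly containing $V(H)$. $A_0$ is the set of vertices outside $V(H)$ with no neighbor in $V(H)$. For positive integers $p,q$, an induced subgraph $F$ of $G$ is $(p,q)$-good if every maximal clique $K$ of $G$ contains at least $p-(\omega(G)-|K|)$ vertices of $F$ and $F$ is $q$-colorable. A clique cutset is a clique whose removal disconnects the (connected) graph. A vertex $v$ is small if $\deg(v)\le \lceil 5\omega(G)/4\rceil-1$. $G$ is basic if it is connected and has no $(4,5)$-good subgraph, no $(1,1)$-good subgraph, no clique cutset, and no small vertex. *)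

From mathcomp Require Import all_boot.
Set Implicit Arguments. Unset Strict Implicit. Unset Printing Implicit Defensive.

Section Graphs.
Variables (T : finType) (e : rel T).

Definition simple_graph := irreflexive e /\ symmetric e.

Definition path_adj (n : nat) (i j : 'I_n) : bool :=
  (i.+1 == j :> nat) || (j.+1 == i :> nat).
Definition cycle_adj (n : nat) (i j : 'I_n) : bool :=
  (i.+1 %% n == j :> nat) || (j.+1 %% n == i :> nat).

Definition has_induced (n : nat) (h : rel 'I_n) : Prop :=
  exists f : 'I_n -> T, injective f /\ forall i j, e (f i) (f j) = h i j.

Definition induced_iso_on (S : {set T}) (n : nat) (h : rel 'I_n) : Prop :=
  exists f : 'I_n -> T, [/\ injective f, f @: setT = S &
                            forall i j, e (f i) (f j) = h i j].

Definition is_clique (K : {set T}) : bool :=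
  [forall x in K, forall y in K, (x != y) ==> e x y].

Definition maximal_clique (K : {set T}) : bool :=
  is_clique K && [forall K' : {set T}, (is_clique K' && (K \subset K')) ==> (K' == K)].

Definition omega : nat := \max_(K : {set T} | is_clique K) #|K|.

Definition colorable (S : {set T}) (q : nat) : Prop :=
  exists c : T -> 'I_q, forall x y, x \in S -> y \in S -> e x y -> c x != c y.

Definition good (p q : nat) (S : {set T}) : Prop :=
  (forall K : {set T}, maximal_clique K -> p - (omega - #|K|) <= #|K :&: S|)
  /\ colorable S q.

Definition connected : Prop := forall u v : T, connect e u v.

Definition clique_cutset (C : {set T}) : Prop :=
  is_clique C /\
  exists u v : T, [/\ u \notin C, v \notin C &
     ~~ connect [rel x y | e x y && (x \notin C) && (y \notin C)] u v].

Definition degree (v : T) : nat := #|[set u | e v u]|.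

(* deg v <= ceil(5 omega / 4) - 1, i.e. deg v < ceil(5 omega/4) *)
Definition small (v : T) : bool := degree v < (5 * omega + 3) %/ 4.

Definition basic : Prop :=
  [/\ connected,
      ~ (exists S, good 4 5 S),
      ~ (exists S, good 1 1 S),
      ~ (exists C, clique_cutset C) &
      forall v, ~~ small v].

Definition nxt (i : 'I_5) : 'I_5 := ordS i.
Definition prv (i : 'I_5) : 'I_5 := ord_pred i.

Definition blowup_vertices (B : 'I_5 -> {set T}) : {set T} :=
  \bigcup_(i < 5) B i.

Definition nice_blowup (B : 'I_5 -> {set T}) : Prop :=
  (forall i j : 'I_5, i != j -> [disjoint B i & B j]) /\
  (forall i, is_clique (B i)) /\
  (forall i, B i != set0) /\
  (forall i x, x \in B i ->
      (exists2 y, y \in B (prv i) & e x y) /\ (exists2 y, y \in B (nxt i) & e x y)) /\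
  (forall i x y, x \in B i -> y \in B (nxt (nxt i)) -> ~~ e x y) /\
  (forall i a b c d, a \in B i -> b \in B (nxt i) -> c \in B (nxt i) ->
      d \in B (nxt (nxt i)) -> b != c ->
      ~ induced_iso_on [set a; b; c; d] (@path_adj 4)).

Definition maximal_nice_blowup (B : 'I_5 -> {set T}) : Prop :=
  nice_blowup B /\
  ~ (exists B' : 'I_5 -> {set T},
       nice_blowup B' /\ blowup_vertices B \proper blowup_vertices B').

End Graphs.

(* Suppose that v has no neighbour in H = V(B).  Let Z be the component of v in
   the graph induced by the vertices with no neighbour in H, and N the set of
   vertices outside Z with a neighbour in Z.  Then N separates v from H, so as G
   is basic, N is not a clique: two non-adjacent x, y in N are joined by a
   chordless path with interior in Z.  Both x and y have neighbours in H, and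
   any two vertices of H are at distance at most 2 in H, so the path closes
   through H into an induced cycle, or contains an induced P7.  Only two
   configurations avoid C4, C6, C7 and P7.  In the first, x and y have a common
   neighbour in Z and adjacent neighbours in H; the traces of x and y on the
   5-cycles of H are then so constrained that x can be added to a bag of B,
   against maximality.  In the second, the path is x - z1 - z2 - y and x, y
   have a common neighbour in H; here every possible trace on a 5-cycle yields
   a forbidden subgraph. *)

From mathcomp Require Import all_boot zify.
Set Implicit Arguments. Unset Strict Implicit. Unset Printing Implicit Defensive.

Definition path_rel (a b : nat) : bool := (a.+1 == b) || (b.+1 == a).
Definition cycle_rel (n a b : nat) : bool := (a.+1 %% n == b) || (b.+1 %% n == a).

(* No two distinct non-adjacent vertices have the same neighbourhood, so any
   realisation of the pattern by a graph without loops is injective. *)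
Definition no_false_twins (k : nat) (h : nat -> nat -> bool) : bool :=
  all (fun a => all (fun b => [|| a == b, h a b |
      has (fun l => h a l != h b l) (iota 0 k)]) (iota 0 k)) (iota 0 k).

(* [vm_compute] is call-by-value, so [has] and the boolean connectives evaluate
   all their arguments; the searches below short-circuit through [if]. *)
Fixpoint lazy_has (A : Type) (a : A -> bool) (s : seq A) : bool :=
  if s is x :: s' then (if a x then true else lazy_has a s') else false.

Lemma lazy_hasE (A : Type) (a : A -> bool) s : lazy_has a s = has a s.
Proof. by elim: s => //= x s ->; case: (a x). Qed.

Section PatternSearch.
Variables (n : nat) (M : nat -> nat -> bool).

Definition extends_induced_path (p : seq nat) (w : nat) : bool :=
  (w \notin p) && (if p is u :: q then M u w && all (fun v => ~~ M v w) q else true).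

Fixpoint induced_paths (k : nat) : seq (seq nat) :=
  if k is k'.+1 then
    flatten [seq [seq w :: p | w <- iota 0 n & extends_induced_path p w]
            | p <- induced_paths k']
  else [:: [::]].

Definition add_vertex (ps : seq (seq nat)) : seq (seq nat) :=
  flatten [seq [seq w :: p | w <- iota 0 n] | p <- ps].

Definition realizes (k : nat) (h : nat -> nat -> bool) (p : seq nat) : bool :=
  if [&& size p == k, uniq p & all (fun a => a < n) p] then
    all (fun a => all (fun b => M (nth 0 p a) (nth 0 p b) == h a b) (iota 0 k)) (iota 0 k)
  else false.

(* Every induced C_k or P_k is an induced P_(k-1) plus one vertex. *)
Definition finds (k : nat) (h : nat -> nat -> bool) : bool :=
  lazy_has (realizes k h) (add_vertex (induced_paths k.-1)).

Definition has_forbidden : bool :=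
  if finds 4 (cycle_rel 4) then true else
  if finds 6 (cycle_rel 6) then true else
  if finds 7 (cycle_rel 7) then true else finds 7 path_rel.

End PatternSearch.

Section InducedSubgraphs.
Variables (T : finType) (e : rel T).
Hypotheses (e_irr : irreflexive e) (e_sym : symmetric e).

Lemma has_induced_of_twin_free k (h : rel 'I_k) (hn : nat -> nat -> bool) (f : 'I_k -> T) :
  (forall i j : 'I_k, h i j = hn i j) -> no_false_twins k hn ->
  (forall i j, e (f i) (f j) = h i j) -> has_induced e h.
Proof.
move=> hE /allP twin_free fE; exists f; split => // i j fij.
apply/eqP/negPn/negP => nij.
have := twin_free i; rewrite mem_iota ltn_ord => /(_ isT) /allP /(_ j).
rewrite mem_iota ltn_ord => /(_ isT).
rewrite (negbTE (nij : (i : nat) != j)) /= => /orP [].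
- by rewrite -hE -fE fij e_irr.
- case/hasP => l; rewrite mem_iota add0n => lk.
  by rewrite -[l]/(Ordinal lk : nat) -!hE -!fE fij eqxx.
Qed.

Ltac edge_facts := first [ reflexivity | assumption | (rewrite e_sym; assumption)
  | (apply/negbTE; assumption) | (rewrite e_sym; apply/negbTE; assumption)
  | exact: e_irr | (rewrite e_sym; reflexivity) ].

Lemma induced_P7 (a0 a1 a2 a3 a4 a5 a6 : T) :
  e a0 a1 -> e a1 a2 -> e a2 a3 -> e a3 a4 -> e a4 a5 -> e a5 a6 ->
  ~~ e a0 a2 -> ~~ e a0 a3 -> ~~ e a0 a4 -> ~~ e a0 a5 -> ~~ e a0 a6 ->
  ~~ e a1 a3 -> ~~ e a1 a4 -> ~~ e a1 a5 -> ~~ e a1 a6 ->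
  ~~ e a2 a4 -> ~~ e a2 a5 -> ~~ e a2 a6 ->
  ~~ e a3 a5 -> ~~ e a3 a6 -> ~~ e a4 a6 -> has_induced e (@path_adj 7).
Proof.
move=> *; apply: (@has_induced_of_twin_free _ _ path_rel
  (fun i => nth a0 [:: a0; a1; a2; a3; a4; a5; a6] i)) => //.
by move=> [[|[|[|[|[|[|[|?]]]]]]] ?] [[|[|[|[|[|[|[|?]]]]]]] ?] //=;
   rewrite /path_adj /=; edge_facts.
Qed.

Lemma induced_C6 (a0 a1 a2 a3 a4 a5 : T) :
  e a0 a1 -> e a1 a2 -> e a2 a3 -> e a3 a4 -> e a4 a5 -> e a5 a0 ->
  ~~ e a0 a2 -> ~~ e a0 a3 -> ~~ e a0 a4 ->
  ~~ e a1 a3 -> ~~ e a1 a4 -> ~~ e a1 a5 ->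
  ~~ e a2 a4 -> ~~ e a2 a5 -> ~~ e a3 a5 -> has_induced e (@cycle_adj 6).
Proof.
move=> *; apply: (@has_induced_of_twin_free _ _ (cycle_rel 6)
  (fun i => nth a0 [:: a0; a1; a2; a3; a4; a5] i)) => //.
by move=> [[|[|[|[|[|[|?]]]]]] ?] [[|[|[|[|[|[|?]]]]]] ?] //=; rewrite /cycle_adj /=; edge_facts.
Qed.

Lemma induced_C7 (a0 a1 a2 a3 a4 a5 a6 : T) :
  e a0 a1 -> e a1 a2 -> e a2 a3 -> e a3 a4 -> e a4 a5 -> e a5 a6 -> e a6 a0 ->
  ~~ e a0 a2 -> ~~ e a0 a3 -> ~~ e a0 a4 -> ~~ e a0 a5 ->
  ~~ e a1 a3 -> ~~ e a1 a4 -> ~~ e a1 a5 -> ~~ e a1 a6 ->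
  ~~ e a2 a4 -> ~~ e a2 a5 -> ~~ e a2 a6 ->
  ~~ e a3 a5 -> ~~ e a3 a6 -> ~~ e a4 a6 -> has_induced e (@cycle_adj 7).
Proof.
move=> *; apply: (@has_induced_of_twin_free _ _ (cycle_rel 7)
  (fun i => nth a0 [:: a0; a1; a2; a3; a4; a5; a6] i)) => //.
by move=> [[|[|[|[|[|[|[|?]]]]]]] ?] [[|[|[|[|[|[|[|?]]]]]]] ?] //=;
   rewrite /cycle_adj /=; edge_facts.
Qed.

Lemma neq_of_edge a b : e a b -> a != b.
Proof. by apply: contraTneq => ->; rewrite e_irr. Qed.

(* C4 has false twins, whence the two extra distinctness hypotheses. *)
Lemma induced_C4 (a0 a1 a2 a3 : T) :
  e a0 a1 -> e a1 a2 -> e a2 a3 -> e a3 a0 ->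
  ~~ e a0 a2 -> ~~ e a1 a3 -> a0 != a2 -> a1 != a3 -> has_induced e (@cycle_adj 4).
Proof.
move=> e01 e12 e23 e30 n02 n13 d02 d13.
exists (fun i : 'I_4 => nth a0 [:: a0; a1; a2; a3] i); split.
- have d01 := neq_of_edge e01; have d12 := neq_of_edge e12.
  have d23 := neq_of_edge e23; have d30 := neq_of_edge e30.
  move=> [[|[|[|[|?]]]] ?] [[|[|[|[|?]]]] ?] //= E;
    first [exact: val_inj | by subst; move: d01 d12 d23 d30 d02 d13; rewrite ?eqxx].
- by move=> [[|[|[|[|?]]]] ?] [[|[|[|[|?]]]] ?] //=; rewrite /cycle_adj /=; edge_facts.
Qed.

Lemma induced_P4 a b c d : e a b -> e b c -> e c d -> ~~ e a c -> ~~ e b d -> ~~ e a d ->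
  a != c -> b != d -> a != d -> induced_iso_on e [set a; b; c; d] (@path_adj 4).
Proof.
move=> eab ebc ecd nac nbd nad dac dbd dad.
have dab := neq_of_edge eab; have dbc := neq_of_edge ebc; have dcd := neq_of_edge ecd.
exists (fun i : 'I_4 => nth a [:: a; b; c; d] i); split.
- move=> [[|[|[|[|?]]]] ?] [[|[|[|[|?]]]] ?] //= E;
    first [exact: val_inj | by subst; move: dab dbc dcd dac dbd dad; rewrite ?eqxx].
- apply/setP => v; rewrite !inE; apply/imsetP/idP.
  + by case=> [[[|[|[|[|?]]]] ?] _ ->] //=; rewrite eqxx ?orbT.
  + rewrite -!orbA => /or4P [] /eqP ->.
    * by exists (Ordinal (isT : 0 < 4)).
    * by exists (Ordinal (isT : 1 < 4)).
    * by exists (Ordinal (isT : 2 < 4)).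
    * by exists (Ordinal (isT : 3 < 4)).
- by move=> [[|[|[|[|?]]]] ?] [[|[|[|[|?]]]] ?] //=; rewrite /path_adj /= ?e_irr; edge_facts.
Qed.

Lemma induced_P4_edges a b c d : a != b -> a != c -> a != d -> b != c -> b != d -> c != d ->
  induced_iso_on e [set a; b; c; d] (@path_adj 4) -> e b c -> ~~ e a d ->
  [&& e a b, e c d, ~~ e a c & ~~ e b d] || [&& e a c, e b d, ~~ e a b & ~~ e c d].
Proof.
move=> + + + + + + [f [_ imf fE]].
have im u : u \in [set a; b; c; d] -> exists i, u = f i.
  by rewrite -imf => /imsetP [i _ ->]; exists i.
have [i ->] : exists i, a = f i by apply: im; rewrite !inE eqxx.
have [j ->] : exists j, b = f j by apply: im; rewrite !inE eqxx ?orbT.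
have [k ->] : exists k, c = f k by apply: im; rewrite !inE eqxx ?orbT.
have [l ->] : exists l, d = f l by apply: im; rewrite !inE eqxx ?orbT.
rewrite !fE; have neq (p q : 'I_4) : f p != f q -> p != q by apply: contra => /eqP ->.
move=> /neq + /neq + /neq + /neq + /neq + /neq.
by case: i => [[|[|[|[|?]]]] ?]; case: j => [[|[|[|[|?]]]] ?];
   case: k => [[|[|[|[|?]]]] ?]; case: l => [[|[|[|[|?]]]] ?].
Qed.

Lemma cliqueP (S : {set T}) :
  (forall u w, u \in S -> w \in S -> u != w -> e u w) -> is_clique e S.
Proof.
move=> h; apply/forallP => u; apply/implyP => uS; apply/forallP => w; apply/implyP => wS.
exact/implyP/h.
Qed.

Lemma has_induced_of_realizes n M (s : seq T) x0 k (h : rel 'I_k)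
    (hn : nat -> nat -> bool) p :
  size s = n -> uniq s ->
  (forall a b, a < n -> b < n -> e (nth x0 s a) (nth x0 s b) = M a b) ->
  (forall i j : 'I_k, h i j = hn i j) -> realizes n M k hn p -> has_induced e h.
Proof.
move=> sz s_uniq sM hE; rewrite /realizes.
case: ifP => // /and3P [/eqP p_size p_uniq /allP p_lt] /allP p_adj.
exists (fun i : 'I_k => nth x0 s (nth 0 p i)); split.
- move=> i j /eqP; rewrite nth_uniq ?sz ?p_lt ?mem_nth ?p_size //.
  by rewrite nth_uniq ?p_size // => /eqP /val_inj.
- move=> i j; rewrite sM ?p_lt ?mem_nth ?p_size // hE.
  have := p_adj i; rewrite mem_iota ltn_ord => /(_ isT) /allP /(_ j).
  by rewrite mem_iota ltn_ord => /(_ isT) /eqP.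
Qed.

Lemma forbidden_of_pattern n M (s : seq T) x0 :
  size s = n -> uniq s ->
  (forall a b, a < n -> b < n -> e (nth x0 s a) (nth x0 s b) = M a b) ->
  has_forbidden n M ->
  [\/ has_induced e (@cycle_adj 4), has_induced e (@cycle_adj 6),
      has_induced e (@cycle_adj 7) | has_induced e (@path_adj 7)].
Proof.
move=> sz s_uniq sM; rewrite /has_forbidden /finds !lazy_hasE.
have realized k (h : rel 'I_k) (hn : nat -> nat -> bool) : (forall i j : 'I_k, h i j = hn i j) ->
    has (realizes n M k hn) (add_vertex n (induced_paths n M k.-1)) -> has_induced e h.
  by move=> hE /hasP [p _]; apply: has_induced_of_realizes sz s_uniq sM hE.
case: ifP => [/realized C4 _|_]; first by constructor 1; exact: C4.
case: ifP => [/realized C6 _|_]; first by constructor 2; exact: C6.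
case: ifP => [/realized C7 _|_ /realized P7]; first by constructor 3; exact: C7.
by constructor 4; exact: P7.
Qed.

End InducedSubgraphs.

Lemma nxt5 (i : 'I_5) : nxt (nxt (nxt (nxt (nxt i)))) = i.
Proof. by case: i => [[|[|[|[|[|?]]]]] ?] //; apply: val_inj. Qed.

Lemma prvE (i : 'I_5) : prv i = nxt (nxt (nxt (nxt i))).
Proof. by case: i => [[|[|[|[|[|?]]]]] ?] //; apply: val_inj. Qed.

Lemma nxt_neq1 (i : 'I_5) : i != nxt i.
Proof. by case: i => [[|[|[|[|[|?]]]]] ?]. Qed.

Lemma nxt_neq2 (i : 'I_5) : i != nxt (nxt i).
Proof. by case: i => [[|[|[|[|[|?]]]]] ?]. Qed.

Lemma nxt_neq3 (i : 'I_5) : i != nxt (nxt (nxt i)).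
Proof. by case: i => [[|[|[|[|[|?]]]]] ?]. Qed.

Lemma nxt_neq4 (i : 'I_5) : i != nxt (nxt (nxt (nxt i))).
Proof. by case: i => [[|[|[|[|[|?]]]]] ?]. Qed.

Lemma eq_nxt1 (i k : 'I_5) : nxt i = k -> i = nxt (nxt (nxt (nxt k))).
Proof. by move=> <-; rewrite nxt5. Qed.

Lemma eq_nxt2 (i k : 'I_5) : nxt (nxt i) = k -> i = nxt (nxt (nxt k)).
Proof. by move=> <-; rewrite nxt5. Qed.

Variant nxt_spec (i : 'I_5) : 'I_5 -> Prop :=
  | Nxt0 : nxt_spec i i
  | Nxt1 : nxt_spec i (nxt i)
  | Nxt2 : nxt_spec i (nxt (nxt i))
  | Nxt3 : nxt_spec i (nxt (nxt (nxt i)))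
  | Nxt4 : nxt_spec i (nxt (nxt (nxt (nxt i)))).

Lemma nxtP (i k : 'I_5) : nxt_spec i k.
Proof.
have: [|| k == i, k == nxt i, k == nxt (nxt i), k == nxt (nxt (nxt i))
         | k == nxt (nxt (nxt (nxt i)))].
  by case: i => [[|[|[|[|[|?]]]]] ?]; case: k => [[|[|[|[|[|?]]]]] ?].
case/orP => [/eqP ->|]; first exact: Nxt0.
case/orP => [/eqP ->|]; first exact: Nxt1.
case/orP => [/eqP ->|]; first exact: Nxt2.
by case/orP => /eqP ->; [exact: Nxt3 | exact: Nxt4].
Qed.

Section NiceBlowup.
Variables (T : finType) (e : rel T) (B : 'I_5 -> {set T}).
Hypotheses (e_irr : irreflexive e) (e_sym : symmetric e) (B_nice : nice_blowup e B).
Local Notation H := (blowup_vertices B).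

Lemma mem_blowup u i : u \in B i -> u \in H.
Proof. by move=> ui; apply/bigcupP; exists i. Qed.

Lemma blowupP u : u \in H -> exists i, u \in B i.
Proof. by case/bigcupP => i _ ui; exists i. Qed.

Lemma blowup_neq u w i k : u \in B i -> w \in B k -> i != k -> u != w.
Proof.
case: B_nice => disj _ ui wk ik; apply: contraTneq (disj i k ik) => uw.
by apply/pred0Pn; exists u; rewrite /= ui uw.
Qed.

Lemma outside_neq x u i : x \notin H -> u \in B i -> x != u.
Proof. by move=> xH ui; apply: contraNneq xH => ->; exact: mem_blowup ui. Qed.

Lemma blowup_edge u w i : u \in B i -> w \in B i -> u != w -> e u w.
Proof.
case: B_nice => _ [cl _] ui wi uw.
by move: (cl i) => /forallP/(_ u)/implyP/(_ ui)/forallP/(_ w)/implyP/(_ wi)/implyP/(_ uw).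
Qed.

Lemma blowup_anti2 u w i : u \in B i -> w \in B (nxt (nxt i)) -> ~~ e u w.
Proof. by case: B_nice => _ [_ [_ [_ [anti _]]]]; apply: anti. Qed.

Lemma blowup_anti3 u w i : u \in B i -> w \in B (nxt (nxt (nxt i))) -> ~~ e u w.
Proof. by move=> ui wi; rewrite e_sym; apply: (blowup_anti2 wi); rewrite nxt5. Qed.

Lemma blowup_nonempty i : exists u, u \in B i.
Proof. by case: B_nice => _ [_ [ne _]]; apply/set0Pn. Qed.

Lemma nbr_nxt u i : u \in B i -> exists2 w, w \in B (nxt i) & e u w.
Proof. by case: B_nice => _ [_ [_ [nbr _]]] /nbr []. Qed.

Lemma nbr_prv u i : u \in B i -> exists2 w, w \in B (nxt (nxt (nxt (nxt i)))) & e u w.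
Proof. by rewrite -prvE; case: B_nice => _ [_ [_ [nbr _]]] /nbr []. Qed.

Lemma blowup_P4_free a b c d i : a \in B i -> b \in B (nxt i) -> c \in B (nxt i) ->
  d \in B (nxt (nxt i)) -> b != c -> e a b -> e c d -> e a c || e b d.
Proof.
move=> ai bi ci di bc eab ecd; apply/norP => -[nac nbd].
case: B_nice => _ [_ [_ [_ [_ noP4]]]]; apply: (noP4 i a b c d) => //.
apply: induced_P4 => //.
- exact: blowup_edge bi ci bc.
- exact: blowup_anti2 ai di.
- exact: blowup_neq ai ci (nxt_neq1 i).
- exact: blowup_neq bi di (nxt_neq1 _).
- exact: blowup_neq ai di (nxt_neq2 i).
Qed.

Lemma common_nbr_nxt b d i : b \in B i -> d \in B (nxt (nxt i)) ->
  exists2 c, c \in B (nxt i) & e b c && e c d.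
Proof.
move=> bi di; have [c ci ebc] := nbr_nxt bi.
have [c' ci' edc'] := nbr_prv di; rewrite !nxt5 in ci'.
have [Ec|cc'] := eqVneq c c'; first by subst c'; exists c; rewrite // ebc e_sym.
case ecd: (e c d); first by exists c; rewrite ?ebc.
case ebc': (e b c'); first by exists c'; rewrite // ebc' e_sym.
by have := blowup_P4_free bi ci ci' di cc' ebc; rewrite e_sym edc' ebc' ecd => /(_ isT).
Qed.

Lemma C5_closing b d i : b \in B i -> d \in B (nxt (nxt i)) ->
  exists c f, [/\ c \in B (nxt (nxt (nxt i))), f \in B (nxt (nxt (nxt (nxt i)))),
                  e d c, e c f & e f b].
Proof.
move=> bi di; have [f fi ebf] := nbr_prv bi.
have [c' ci' efc'] := nbr_prv fi; rewrite !nxt5 in ci'.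
have [c ci edc] := nbr_nxt di.
have [Ec|cc'] := eqVneq c c'; first by subst c'; exists c, f; split; rewrite // e_sym.
case ecf: (e c f); first by exists c, f; split; rewrite // e_sym.
have := blowup_P4_free di ci ci' fi cc' edc; rewrite e_sym efc' ecf orbF => /(_ isT) edc'.
by exists c', f; split; rewrite // e_sym.
Qed.

Record C5_at (k : 'I_5) (c0 c1 c2 c3 c4 : T) : Prop := C5At {
  C5_0 : c0 \in B k;
  C5_1 : c1 \in B (nxt k);
  C5_2 : c2 \in B (nxt (nxt k));
  C5_3 : c3 \in B (nxt (nxt (nxt k)));
  C5_4 : c4 \in B (nxt (nxt (nxt (nxt k))));
  C5_01 : e c0 c1; C5_12 : e c1 c2; C5_23 : e c2 c3; C5_34 : e c3 c4; C5_40 : e c4 c0 }.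

Lemma C5_rot k c0 c1 c2 c3 c4 : C5_at k c0 c1 c2 c3 c4 -> C5_at (nxt k) c1 c2 c3 c4 c0.
Proof. by case=> *; constructor; rewrite ?nxt5. Qed.

Lemma C5_through b b' i : b \in B i -> b' \in B (nxt i) -> e b b' ->
  exists c2 c3 c4, C5_at i b b' c2 c3 c4.
Proof.
move=> bi bi' ebb'; have [c2 c2i e2] := nbr_nxt bi'.
have [c3 [c4 [c3i c4i e23 e34 e4b]]] := C5_closing bi c2i.
by exists c2, c3, c4; constructor.
Qed.

Lemma blowup_dist2 u w : u \in H -> w \in H ->
  [\/ u = w, e u w | exists2 m, m \in H & e u m && e m w].
Proof.
move=> /blowupP [i ui] /blowupP [k wk]; case: (nxtP i k) wk => wk.
- have [->|uw] := eqVneq u w; first by constructor 1.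
  by constructor 2; exact: blowup_edge ui wk uw.
- have [m mi eum] := nbr_nxt ui.
  have [Em|mw] := eqVneq m w; first by subst m; constructor 2.
  by constructor 3; exists m; rewrite ?(mem_blowup mi) // eum (blowup_edge mi wk mw).
- have [m mi /andP [eum emw]] := common_nbr_nxt ui wk.
  by constructor 3; exists m; rewrite ?(mem_blowup mi) // eum emw.
- rewrite -[i in B i]nxt5 in ui.
  have [m mi /andP [ewm emu]] := common_nbr_nxt wk ui.
  by constructor 3; exists m; rewrite ?(mem_blowup mi) // e_sym emu e_sym ewm.
- have [m mi ewm] := nbr_nxt wk; rewrite nxt5 in mi.
  have [Em|mu] := eqVneq m u; first by subst m; constructor 2; rewrite e_sym.
  have eum : e u m by apply: blowup_edge ui mi _; rewrite eq_sym.
  by constructor 3; exists m; rewrite ?(mem_blowup mi) // eum e_sym.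
Qed.

Section ForbiddenFree.
Hypotheses (P7_free : ~ has_induced e (@path_adj 7)) (C4_free : ~ has_induced e (@cycle_adj 4))
  (C6_free : ~ has_induced e (@cycle_adj 6)) (C7_free : ~ has_induced e (@cycle_adj 7)).
Hypothesis B_max :
  ~ exists B' : 'I_5 -> {set T}, nice_blowup e B' /\ H \proper blowup_vertices B'.

Lemma no_C4 a0 a1 a2 a3 : e a0 a1 -> e a1 a2 -> e a2 a3 -> e a3 a0 ->
  ~~ e a0 a2 -> ~~ e a1 a3 -> a0 != a2 -> a1 != a3 -> False.
Proof. by move=> *; apply/C4_free/(@induced_C4 _ _ e_irr e_sym a0 a1 a2 a3). Qed.

Lemma no_C6 a0 a1 a2 a3 a4 a5 :
  e a0 a1 -> e a1 a2 -> e a2 a3 -> e a3 a4 -> e a4 a5 -> e a5 a0 ->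
  ~~ e a0 a2 -> ~~ e a0 a3 -> ~~ e a0 a4 ->
  ~~ e a1 a3 -> ~~ e a1 a4 -> ~~ e a1 a5 ->
  ~~ e a2 a4 -> ~~ e a2 a5 -> ~~ e a3 a5 -> False.
Proof. by move=> *; apply/C6_free/(@induced_C6 _ _ e_irr e_sym a0 a1 a2 a3 a4 a5). Qed.

Lemma no_C7 a0 a1 a2 a3 a4 a5 a6 :
  e a0 a1 -> e a1 a2 -> e a2 a3 -> e a3 a4 -> e a4 a5 -> e a5 a6 -> e a6 a0 ->
  ~~ e a0 a2 -> ~~ e a0 a3 -> ~~ e a0 a4 -> ~~ e a0 a5 ->
  ~~ e a1 a3 -> ~~ e a1 a4 -> ~~ e a1 a5 -> ~~ e a1 a6 ->
  ~~ e a2 a4 -> ~~ e a2 a5 -> ~~ e a2 a6 ->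
  ~~ e a3 a5 -> ~~ e a3 a6 -> ~~ e a4 a6 -> False.
Proof. by move=> *; apply/C7_free/(@induced_C7 _ _ e_irr e_sym a0 a1 a2 a3 a4 a5 a6). Qed.

Lemma no_P7 a0 a1 a2 a3 a4 a5 a6 :
  e a0 a1 -> e a1 a2 -> e a2 a3 -> e a3 a4 -> e a4 a5 -> e a5 a6 ->
  ~~ e a0 a2 -> ~~ e a0 a3 -> ~~ e a0 a4 -> ~~ e a0 a5 -> ~~ e a0 a6 ->
  ~~ e a1 a3 -> ~~ e a1 a4 -> ~~ e a1 a5 -> ~~ e a1 a6 ->
  ~~ e a2 a4 -> ~~ e a2 a5 -> ~~ e a2 a6 ->
  ~~ e a3 a5 -> ~~ e a3 a6 -> ~~ e a4 a6 -> False.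
Proof. by move=> *; apply/P7_free/(@induced_P7 _ _ e_irr e_sym a0 a1 a2 a3 a4 a5 a6). Qed.

Lemma no_forbidden_pattern n M (s : seq T) x0 :
  size s = n -> uniq s ->
  (forall a b, a < n -> b < n -> e (nth x0 s a) (nth x0 s b) = M a b) ->
  ~~ has_forbidden n M.
Proof.
move=> sz s_uniq sM; apply/negP => /(forbidden_of_pattern sz s_uniq sM).
by case.
Qed.

Ltac bag_nonadj := match goal with
  | H1 : is_true (in_mem ?a (@mem _ _ _)), H2 : is_true (in_mem ?b (@mem _ _ _))
    |- is_true (~~ e ?a ?b) =>
     first [ exact: (blowup_anti2 H1 H2) | exact: (blowup_anti3 H1 H2)
           | rewrite e_sym; first [exact: (blowup_anti2 H2 H1) | exact: (blowup_anti3 H2 H1)] ]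
  end.

Ltac bag_neq := match goal with
  | H1 : is_true (in_mem ?a (@mem _ _ _)), H2 : is_true (in_mem ?b (@mem _ _ _))
    |- is_true (?a != ?b) =>
     first [ exact: (blowup_neq H1 H2 (nxt_neq1 _)) | exact: (blowup_neq H1 H2 (nxt_neq2 _))
           | exact: (blowup_neq H1 H2 (nxt_neq3 _)) | exact: (blowup_neq H1 H2 (nxt_neq4 _))
           | rewrite eq_sym; first
             [ exact: (blowup_neq H2 H1 (nxt_neq1 _)) | exact: (blowup_neq H2 H1 (nxt_neq2 _))
             | exact: (blowup_neq H2 H1 (nxt_neq3 _)) | exact: (blowup_neq H2 H1 (nxt_neq4 _)) ] ]
  | Hx : is_true (~~ in_mem ?a _), H2 : is_true (in_mem ?b (@mem _ _ _)) |- is_true (?a != ?b) =>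
     exact: (outside_neq Hx H2)
  | Hx : is_true (~~ in_mem ?a _), H2 : is_true (in_mem ?b (@mem _ _ _)) |- is_true (?b != ?a) =>
     rewrite eq_sym; exact: (outside_neq Hx H2)
  end.

Ltac graph_fact := first
  [ reflexivity | assumption | (rewrite e_sym; assumption) | (rewrite eq_sym; assumption)
  | (rewrite e_sym; reflexivity) | exact: e_irr
  | (apply/negbTE; first [assumption | (rewrite e_sym; assumption) | bag_nonadj])
  | bag_nonadj | bag_neq | (rewrite ?nxt5; assumption)
  | (apply: (neq_of_edge e_irr); first [assumption | (rewrite e_sym; assumption)]) ].

(* Vertices [0..4] form a 5-cycle, [5] and [6] are attached to it as described
   by [bx] and [yy], and [tail] lists the remaining edges. *)
Definition C5_with (bx yy : seq bool) (tail : seq (nat * nat)) (a b : nat) : bool :=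
  let adj a b :=
    if b < 5 then (b == a.+1) || (a == 0) && (b == 4)
    else if b == 5 then nth false bx a
    else if b == 6 then (a < 5) && nth false yy a
    else has (fun p => (p.1 == a) && (p.2 == b)) tail in
  if a < b then adj a b else if b < a then adj b a else false.

Fixpoint bits (k : nat) : seq (seq bool) :=
  if k is k'.+1 then [seq b :: l | b <- [:: true; false], l <- bits k'] else [:: [::]].

Lemma mem_bits l : l \in bits (size l).
Proof.
elim: l => //= b l IH; rewrite !mem_cat.
by case: b; rewrite (map_f (cons _) IH) ?orbT.
Qed.

Definition disjoint_traces (bx yy : seq bool) : bool :=
  all (fun i => ~~ (nth false bx i && nth false yy i)) (iota 0 5).

Definition trace_ok (bx yy : seq bool) : bool :=
  let x i := nth false bx i in let y i := nth false yy i in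
  ~~ [&& x 0, ~~ x 1 & ~~ x 4] && (x 0 && y 1 ==> [&& x 4, y 2 & x 3 || y 3]).

Lemma outer_pair_patterns :
  all (fun bx => all (fun yy =>
    if disjoint_traces bx yy ==> trace_ok bx yy then true
    else has_forbidden 8 (C5_with bx yy [:: (5, 7); (6, 7)])) (bits 5)) (bits 5).
Proof. by vm_compute. Qed.

Record outer_pair (x y z : T) : Prop := OuterPair {
  op_x : x \notin H; op_y : y \notin H; op_z : z \notin H;
  op_z_anti : forall h, h \in H -> ~~ e z h;
  op_zx : e z x; op_zy : e z y; op_xy : ~~ e x y; op_x_neq_y : x != y;
  op_no_common : forall h, h \in H -> ~~ (e x h && e y h) }.

Lemma outer_pair_sym x y z : outer_pair x y z -> outer_pair y x z.
Proof.
case=> xH yH zH z_anti ezx ezy nxy dxy no_common; split=> //.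
- by rewrite e_sym.
- by rewrite eq_sym.
- by move=> h /no_common; rewrite andbC.
Qed.

Lemma outer_pair_trace x y z k c0 c1 c2 c3 c4 :
  outer_pair x y z -> C5_at k c0 c1 c2 c3 c4 ->
  trace_ok [:: e x c0; e x c1; e x c2; e x c3; e x c4]
           [:: e y c0; e y c1; e y c2; e y c3; e y c4].
Proof.
move=> [xH yH zH z_anti ezx ezy nxy dxy no_common] [k0 k1 k2 k3 k4 e01 e12 e23 e34 e40].
have := outer_pair_patterns.
move=> /allP/(_ _ (mem_bits [:: e x c0; e x c1; e x c2; e x c3; e x c4])).
move=> /allP/(_ _ (mem_bits [:: e y c0; e y c1; e y c2; e y c3; e y c4])).
rewrite /disjoint_traces /= !no_common ?(mem_blowup k0, mem_blowup k1, mem_blowup k2,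
  mem_blowup k3, mem_blowup k4) //=.
case: trace_ok => //; apply: contraTT => _.
have z0 := z_anti _ (mem_blowup k0); have z1 := z_anti _ (mem_blowup k1).
have z2 := z_anti _ (mem_blowup k2); have z3 := z_anti _ (mem_blowup k3).
have z4 := z_anti _ (mem_blowup k4).
apply: (@no_forbidden_pattern _ _ [:: c0; c1; c2; c3; c4; x; y; z] c0 erefl).
- by rewrite /= !inE !negb_or; repeat (apply/andP; split); graph_fact.
- by move=> [|[|[|[|[|[|[|[|a]]]]]]]] [|[|[|[|[|[|[|[|b]]]]]]]] //= _ _;
     rewrite /C5_with /=; graph_fact.
Qed.

Lemma outer_pair_C5_isolated x y z k c0 c1 c2 c3 c4 :
  outer_pair x y z -> C5_at k c0 c1 c2 c3 c4 -> e x c0 -> ~~ e x c1 -> ~~ e x c4 -> False.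
Proof.
move=> P C x0 x1 x4; move: (outer_pair_trace P C).
by rewrite /trace_ok /= x0 (negbTE x1) (negbTE x4).
Qed.

Lemma outer_pair_C5_cross x y z k c0 c1 c2 c3 c4 :
  outer_pair x y z -> C5_at k c0 c1 c2 c3 c4 -> e x c0 -> e y c1 ->
  [&& e x c4, e y c2 & e x c3 || e y c3].
Proof.
move=> P C x0 y1; move: (outer_pair_trace P C).
by rewrite /trace_ok /= x0 y1 => /andP [].
Qed.

Section Extension.
Variables (x y z : T) (j : 'I_5) (v0 v1 v2 v3 v4 : T).
Hypotheses (P : outer_pair x y z) (C : C5_at j v0 v1 v2 v3 v4).
Hypotheses (x_v4 : e x v4) (x_v0 : e x v0) (x_v1 : e x v1) (y_v2 : e y v2) (y_v3 : e y v3).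

Let xH := op_x P.

Lemma x_anti_B2 p : p \in B (nxt (nxt j)) -> ~~ e x p.
Proof.
move=> pj; apply/negP => exp.
case: C => k0 k1 k2 k3 k4 e01 e12 e23 e34 e40.
have nxv2 : ~~ e x v2 by move: (op_no_common P (mem_blowup k2)); rewrite y_v2 andbT.
have nxv3 : ~~ e x v3 by move: (op_no_common P (mem_blowup k3)); rewrite y_v3 andbT.
have [q qj /andP [epq eqv4]] := common_nbr_nxt pj k4.
have exq : e x q.
  by apply/negPn/negP => nxq; apply: (no_C4 (a0:=x) (a1:=p) (a2:=q) (a3:=v4)); graph_fact.
have epv2 : e p v2 by apply: blowup_edge pj k2 _; apply: contraTneq exp => ->.
have eqv3 : e q v3 by apply: blowup_edge qj k3 _; apply: contraTneq exq => ->.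
have npv3 : ~~ e p v3.
  by apply/negP => epv3; apply: (no_C4 (a0:=x) (a1:=p) (a2:=v3) (a3:=v4)); graph_fact.
have nqv2 : ~~ e q v2.
  by apply/negP => eqv2; apply: (no_C4 (a0:=x) (a1:=q) (a2:=v2) (a3:=v1)); graph_fact.
by apply: (no_C4 (a0:=p) (a1:=q) (a2:=v3) (a3:=v2)); graph_fact.
Qed.

Lemma x_anti_B3 p : p \in B (nxt (nxt (nxt j))) -> ~~ e x p.
Proof.
move=> pj; apply/negP => exp.
case: C => k0 k1 k2 k3 k4 e01 e12 e23 e34 e40.
have [q qj /andP [e1q eqp]] := common_nbr_nxt k1 pj.
have exq : e x q.
  by apply/negPn/negP => nxq; apply: (no_C4 (a0:=x) (a1:=v1) (a2:=q) (a3:=p)); graph_fact.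
by move: (x_anti_B2 qj); rewrite exq.
Qed.

Lemma x_complete_B w : w \in B j -> e x w.
Proof.
move=> wj; apply/negPn/negP => nxw.
have anti_nxt d : d \in B (nxt j) -> e w d -> ~~ e x d.
  move=> dj ewd; apply/negP => exd.
  have [c2 [c3 [c4 Cw]]] := C5_through wj dj ewd.
  exact: (outer_pair_C5_isolated P (C5_rot Cw) exd (x_anti_B2 (C5_2 Cw))).
have anti_prv a : a \in B (nxt (nxt (nxt (nxt j)))) -> e a w -> ~~ e x a.
  move=> aj eaw; apply/negP => exa; rewrite -[j in B j]nxt5 in wj.
  have [c2 [c3 [c4 Ca]]] := C5_through aj wj eaw.
  apply: (outer_pair_C5_isolated P Ca exa nxw); apply: x_anti_B3.
  by rewrite -[j]nxt5; apply: C5_4 Ca.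
case: C => k0 k1 k2 k3 k4 e01 e12 e23 e34 e40.
have nwv1 : ~~ e w v1 by apply/negP => /(anti_nxt _ k1); rewrite x_v1.
have nv4w : ~~ e v4 w by apply/negP => /(anti_prv _ k4); rewrite x_v4.
have [d dj ewd] := nbr_nxt wj.
have [a aj ewa] := nbr_prv wj.
have v0w : v0 != w by apply: contraTneq x_v0 => ->.
have ev0d : e v0 d.
  have := @blowup_P4_free v4 v0 w d (nxt (nxt (nxt (nxt j)))) k4; rewrite !nxt5.
  by move=> /(_ k0 wj dj v0w e40 ewd); rewrite (negbTE nv4w).
have eav0 : e a v0.
  have := @blowup_P4_free a w v0 v1 (nxt (nxt (nxt (nxt j)))) aj; rewrite !nxt5.
  move=> /(_ wj k0 k1 _ _ e01); rewrite eq_sym e_sym => /(_ v0w ewa).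
  by rewrite (negbTE nwv1) orbF.
have dj' : d \in B (nxt (nxt (nxt (nxt (nxt (nxt j)))))) by rewrite nxt5.
have [c [f [cj fj edc ecf efa]]] := C5_closing aj dj'; rewrite !nxt5 in cj fj.
(* On the 5-cycle v0 d c f a, x sees v0 but neither of its neighbours. *)
have Cv : C5_at j v0 d c f a by constructor.
apply: (outer_pair_C5_isolated P Cv x_v0); first exact: anti_nxt.
by apply: anti_prv; rewrite // e_sym.
Qed.

Lemma no_P4_x_first b c d : b \in B (nxt j) -> c \in B (nxt j) -> d \in B (nxt (nxt j)) ->
  b != c -> e x b -> e c d -> ~~ e x c -> ~~ e b d -> False.
Proof.
move=> bj cj dj bc exb ecd nxc nbd.
have ebc := blowup_edge bj cj bc.
have [c2 [c3 [c4 Cc]]] := C5_through cj dj ecd.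
case: (Cc) => _ _ k2 k3 k4 _ e2 e3 e4 e5; rewrite !nxt5 in k4.
have exc4 := x_complete_B k4.
have nxd := x_anti_B2 dj; have nxc2 := x_anti_B3 k2.
have [exc3|nxc3] := boolP (e x c3).
- by apply: (no_C6 (a0:=x) (a1:=b) (a2:=c) (a3:=d) (a4:=c2) (a5:=c3)); graph_fact.
- exact: (outer_pair_C5_isolated P (C5_rot (C5_rot (C5_rot (C5_rot Cc)))) exc4 nxc nxc3).
Qed.

Lemma no_P4_x_last a b c : a \in B (nxt (nxt (nxt j))) -> b \in B (nxt (nxt (nxt (nxt j)))) ->
  c \in B (nxt (nxt (nxt (nxt j)))) -> b != c -> e a b -> e c x -> ~~ e a c -> ~~ e b x -> False.
Proof.
move=> aj bj cj bc eab ecx nac nbx.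
have ebc := blowup_edge bj cj bc.
have [g gj ebg] := nbr_nxt bj; rewrite nxt5 in gj.
have gj' : g \in B (nxt (nxt (nxt (nxt (nxt j))))) by rewrite nxt5.
have [d [f [dj fj egd edf efa]]] := C5_closing aj gj'; rewrite !nxt5 in dj fj.
have exg := x_complete_B gj.
have nxa := x_anti_B3 aj; have nxf := x_anti_B2 fj.
have [exd|nxd] := boolP (e x d).
- by apply: (no_C6 (a0:=x) (a1:=c) (a2:=b) (a3:=a) (a4:=f) (a5:=d)); graph_fact.
- have Cg : C5_at j g d f a b by constructor; rewrite // e_sym.
  by apply: (outer_pair_C5_isolated P Cg exg nxd); rewrite e_sym.
Qed.

Lemma no_P4_x_second a c d : a \in B (nxt (nxt (nxt (nxt j)))) -> c \in B j -> d \in B (nxt j) ->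
  e a x -> e c d -> ~~ e a c -> ~~ e x d -> False.
Proof.
move=> aj cj dj eax ecd nac nxd.
have dj' : d \in B (nxt (nxt (nxt (nxt (nxt (nxt j)))))) by rewrite nxt5.
have [g [f [gj fj edg egf efa]]] := C5_closing aj dj'; rewrite !nxt5 in gj fj.
have exc := x_complete_B cj; have nxf := x_anti_B3 fj; have nxg := x_anti_B2 gj.
by apply: (no_C6 (a0:=x) (a1:=a) (a2:=f) (a3:=g) (a4:=d) (a5:=c)); graph_fact.
Qed.

Lemma no_P4_x_third a b d : a \in B (nxt (nxt (nxt (nxt j)))) -> b \in B j -> d \in B (nxt j) ->
  e a b -> e x d -> ~~ e a x -> ~~ e b d -> False.
Proof.
move=> aj bj dj eab exd nax nbd.
have dj' : d \in B (nxt (nxt (nxt (nxt (nxt (nxt j)))))) by rewrite nxt5.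
have [g [f [gj fj edg egf efa]]] := C5_closing aj dj'; rewrite !nxt5 in gj fj.
have exb := x_complete_B bj; have nxf := x_anti_B3 fj; have nxg := x_anti_B2 gj.
by apply: (no_C6 (a0:=x) (a1:=d) (a2:=g) (a3:=f) (a4:=a) (a5:=b)); graph_fact.
Qed.

Definition B_add (i : 'I_5) : {set T} := if i == j then x |: B j else B i.

Lemma B_addP u i : u \in B_add i -> (i = j /\ u = x) \/ u \in B i.
Proof.
rewrite /B_add; case: eqP => [->|_]; last by right.
by rewrite !inE => /orP [/eqP ->|]; [left|right].
Qed.

Lemma B_sub_add u i : u \in B i -> u \in B_add i.
Proof. by rewrite /B_add; case: eqP => [->|_] // ui; rewrite !inE ui orbT. Qed.

Lemma x_in_B_add : x \in B_add j.
Proof. by rewrite /B_add eqxx !inE eqxx. Qed.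

Lemma x_notin_B i : x \notin B i.
Proof. by apply: contraNN xH; apply: mem_blowup. Qed.

Lemma B_add_neq u w i k : u \in B_add i -> w \in B_add k -> i != k -> u != w.
Proof.
move=> /B_addP [[-> ->]|ui] /B_addP [[-> ->]|wk] ik.
- by rewrite eqxx in ik.
- by apply: contraNneq (x_notin_B k) => ->.
- by apply: contraNneq (x_notin_B i) => <-.
- exact: blowup_neq ui wk ik.
Qed.

Lemma B_add_edge u w i : u \in B_add i -> w \in B_add i -> u != w -> e u w.
Proof.
move=> /B_addP [[-> ->]|ui] /B_addP [[Ei ->]|wi] uw.
- by rewrite eqxx in uw.
- exact: x_complete_B.
- by subst i; rewrite e_sym; apply: x_complete_B.
- exact: blowup_edge ui wi uw.
Qed.

Lemma B_add_anti2 u w i : u \in B_add i -> w \in B_add (nxt (nxt i)) -> ~~ e u w.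
Proof.
move=> /B_addP [[-> ->]|ui] /B_addP [[Ej ->]|wi].
- by move: (nxt_neq2 j); rewrite Ej eqxx.
- exact: x_anti_B2.
- by rewrite e_sym; apply: x_anti_B3; rewrite -Ej nxt5.
- exact: blowup_anti2 ui wi.
Qed.

Lemma B_add_P4_free a b c d i : a \in B_add i -> b \in B_add (nxt i) -> c \in B_add (nxt i) ->
  d \in B_add (nxt (nxt i)) -> b != c -> e a b -> e c d -> ~~ e a c -> ~~ e b d -> False.
Proof.
move=> ai bi ci di bc eab ecd nac nbd.
have neq_nxt1 : nxt j != j by rewrite eq_sym nxt_neq1.
have neq_nxt2 : nxt (nxt j) != j by rewrite eq_sym nxt_neq2.
case: (B_addP ai) => [[Ei Ea]|{}ai].
  subst i a.
  case: (B_addP bi) => [[Ej _]|{}bi]; first by rewrite Ej eqxx in neq_nxt1.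
  case: (B_addP ci) => [[Ej _]|{}ci]; first by rewrite Ej eqxx in neq_nxt1.
  case: (B_addP di) => [[Ej _]|{}di]; first by rewrite Ej eqxx in neq_nxt2.
  exact: no_P4_x_first bi ci di bc eab ecd nac nbd.
case: (B_addP bi) => [[/eq_nxt1 Ei Eb]|{}bi].
  subst i b; rewrite ?nxt5 in ci di.
  case: (B_addP ci) => [[_ Ec]|{}ci]; first by rewrite Ec eqxx in bc.
  case: (B_addP di) => [[Ej _]|{}di]; first by rewrite Ej eqxx in neq_nxt1.
  exact: no_P4_x_second ai ci di eab ecd nac nbd.
case: (B_addP ci) => [[/eq_nxt1 Ei Ec]|{}ci].
  subst i c; rewrite ?nxt5 in bi di.
  case: (B_addP di) => [[Ej _]|{}di]; first by rewrite Ej eqxx in neq_nxt1.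
  exact: no_P4_x_third ai bi di eab ecd nac nbd.
case: (B_addP di) => [[/eq_nxt2 Ei Ed]|{}di].
  by subst i d; apply: no_P4_x_last ai bi ci bc eab ecd nac nbd.
by move: (blowup_P4_free ai bi ci di bc eab ecd); rewrite (negbTE nac) (negbTE nbd).
Qed.

Lemma B_add_nice : nice_blowup e B_add.
Proof.
have [k0 k1 _ _ k4 _ _ _ _ _] := C.
split; [|split; [|split; [|split; [|split]]]].
- move=> i k ik; apply/pred0P => u /=; apply/negP => /andP [ui uk].
  by move: (B_add_neq ui uk ik); rewrite eqxx.
- by move=> i; apply: cliqueP => u w; apply: B_add_edge.
- by move=> i; have [u ui] := blowup_nonempty i; apply/set0Pn; exists u; apply: B_sub_add.
- move=> i u /B_addP [[-> ->]|ui]; split.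
  + by exists v4; rewrite // prvE; apply: B_sub_add.
  + by exists v1; rewrite //; apply: B_sub_add.
  + by have [w wi ew] := nbr_prv ui; exists w; rewrite // prvE; apply: B_sub_add.
  + by have [w wi ew] := nbr_nxt ui; exists w => //; apply: B_sub_add.
- by move=> i u w; apply: B_add_anti2.
- move=> i a b c d ai bi ci di bc isoP4.
  have nab := B_add_neq ai bi (nxt_neq1 _); have nac := B_add_neq ai ci (nxt_neq1 _).
  have nad := B_add_neq ai di (nxt_neq2 _); have nbd := B_add_neq bi di (nxt_neq1 _).
  have ncd := B_add_neq ci di (nxt_neq1 _).
  case/orP: (induced_P4_edges nab nac nad bc nbd ncd isoP4 (B_add_edge bi ci bc)
               (B_add_anti2 ai di)) => /and4P [eab ecd nac' nbd'].
  + exact: B_add_P4_free ai bi ci di bc eab ecd nac' nbd'.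
  + by apply: B_add_P4_free ai ci bi di _ eab ecd nac' nbd'; rewrite eq_sym.
Qed.

Lemma outer_pair_split_trace : False.
Proof.
apply: B_max; exists B_add; split; first exact: B_add_nice.
apply/properP; split.
- by apply/subsetP => u /bigcupP [i _ ui]; apply/bigcupP; exists i => //; apply: B_sub_add.
- by exists x => //; apply/bigcupP; exists j => //; apply: x_in_B_add.
Qed.

End Extension.

Lemma outer_pair_no_cross_edge x y z k h1 h2 : outer_pair x y z ->
  h1 \in B k -> h2 \in B (nxt k) -> e x h1 -> e y h2 -> e h1 h2 -> False.
Proof.
move=> P h1k h2k xh1 yh2 e12.
have [c2 [c3 [c4 Ch]]] := C5_through h1k h2k e12.
case/and3P: (outer_pair_C5_cross P Ch xh1 yh2) => xc4 yc2 /orP [xc3|yc3].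
- exact: outer_pair_split_trace P (C5_rot (C5_rot (C5_rot (C5_rot Ch)))) xc3 xc4 xh1 yh2 yc2.
- exact: outer_pair_split_trace (outer_pair_sym P) (C5_rot (C5_rot Ch)) yh2 yc2 yc3 xc4 xh1.
Qed.

Lemma outer_nbr_sides x y z k h : outer_pair x y z -> h \in B k -> e x h ->
  exists2 u, e x u && e u h & (u \in B (nxt k)) || (u \in B (nxt (nxt (nxt (nxt k))))).
Proof.
move=> P hk xh; have [n1 n1k ehn] := nbr_nxt hk.
have [c2 [c3 [c4 Ch]]] := C5_through hk n1k ehn.
have [xn1|nxn1] := boolP (e x n1); first by exists n1; rewrite ?xn1 ?n1k // e_sym.
have [xc4|nxc4] := boolP (e x c4); last by case: (outer_pair_C5_isolated P Ch xh nxn1 nxc4).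
by exists c4; rewrite ?xc4 ?(C5_4 Ch) ?orbT ?(C5_40 Ch).
Qed.

Lemma outer_pair_same_bag x y z k h1 h2 : outer_pair x y z ->
  h1 \in B k -> h2 \in B k -> e x h1 -> e y h2 -> False.
Proof.
move=> P h1k h2k xh1 yh2.
have no_cross := outer_pair_no_cross_edge P.
have no_cross' := outer_pair_no_cross_edge (outer_pair_sym P).
have nxh2 : ~~ e x h2.
  by apply: contra (op_no_common P (mem_blowup h2k)) => xh2; rewrite xh2 yh2.
have d12 : h1 != h2 by apply: contraTneq xh1 => ->.
have e12 := blowup_edge h1k h2k d12.
have h1k' : h1 \in B (nxt (nxt (nxt (nxt (nxt k))))) by rewrite nxt5.
have h2k' : h2 \in B (nxt (nxt (nxt (nxt (nxt k))))) by rewrite nxt5.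
have [u /andP [xu uh1] /orP [uk|uk]] := outer_nbr_sides P h1k xh1;
have [v /andP [yv vh2] /orP [vk|vk]] := outer_nbr_sides (outer_pair_sym P) h2k yh2;
have uH := mem_blowup uk; have vH := mem_blowup vk;
have duv : u != v by apply: contraTneq xu => ->; apply: contra (op_no_common P vH) => ->.
- have [uh2|nuh2] := boolP (e u h2); first by apply: no_cross' h2k uk yh2 xu _; rewrite e_sym.
  have [h1v|nh1v] := boolP (e h1 v); first exact: no_cross h1k vk xh1 yv h1v.
  have euv := blowup_edge uk vk duv.
  by apply: (no_C4 (a0:=h1) (a1:=u) (a2:=v) (a3:=h2)); graph_fact.
- have [uh2|nuh2] := boolP (e u h2); first by apply: no_cross' h2k uk yh2 xu _; rewrite e_sym.
  have [vh1|nvh1] := boolP (e v h1); first exact: no_cross' vk h1k' yv xh1 vh1.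
  have uk' : u \in B (nxt (nxt (nxt (nxt (nxt (nxt k)))))) by rewrite nxt5.
  have := blowup_P4_free vk h2k' h1k' uk' _ vh2; rewrite eq_sym e_sym => /(_ d12 uh1).
  by rewrite (negbTE nvh1) e_sym (negbTE nuh2).
- have [uh2|nuh2] := boolP (e u h2); first exact: no_cross uk h2k' xu yh2 uh2.
  have [h1v|nh1v] := boolP (e h1 v); first exact: no_cross h1k vk xh1 yv h1v.
  have vk' : v \in B (nxt (nxt (nxt (nxt (nxt (nxt k)))))) by rewrite nxt5.
  have := blowup_P4_free uk h1k' h2k' vk' d12 uh1; rewrite e_sym => /(_ vh2).
  by rewrite (negbTE nuh2) (negbTE nh1v).
- have [uh2|nuh2] := boolP (e u h2); first exact: no_cross uk h2k' xu yh2 uh2.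
  have [vh1|nvh1] := boolP (e v h1); first exact: no_cross' vk h1k' yv xh1 vh1.
  have euv := blowup_edge uk vk duv.
  by apply: (no_C4 (a0:=h1) (a1:=u) (a2:=v) (a3:=h2)); graph_fact.
Qed.

Lemma outer_pair_no_adjacent_nbrs x y z h1 h2 : outer_pair x y z ->
  h1 \in H -> h2 \in H -> e x h1 -> e y h2 -> e h1 h2 -> False.
Proof.
move=> P /blowupP [k h1k] /blowupP [l h2l] xh1 yh2 e12; case: (nxtP k l) h2l => h2l.
- exact: outer_pair_same_bag P h1k h2l xh1 yh2.
- exact: outer_pair_no_cross_edge P h1k h2l xh1 yh2 e12.
- by move: (blowup_anti2 h1k h2l); rewrite e12.
- by move: (blowup_anti3 h1k h2l); rewrite e12.
- have h1k' : h1 \in B (nxt (nxt (nxt (nxt (nxt k))))) by rewrite nxt5.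
  by apply: outer_pair_no_cross_edge (outer_pair_sym P) h2l h1k' yh2 xh1 _; rewrite e_sym.
Qed.

Lemma common_nbr_patterns :
  all (fun bx => all (fun yy =>
    has_forbidden 9 (C5_with (true :: bx) (true :: yy) [:: (5, 7); (7, 8); (6, 8)]))
  (bits 4)) (bits 4).
Proof. by vm_compute. Qed.

Lemma no_common_nbr_across_P4 x f1 f2 y h :
  x \notin H -> y \notin H -> f1 \notin H -> f2 \notin H ->
  (forall u, u \in H -> ~~ e f1 u) -> (forall u, u \in H -> ~~ e f2 u) ->
  e x f1 -> e f1 f2 -> e f2 y -> ~~ e x f2 -> ~~ e x y -> ~~ e f1 y -> x != y ->
  h \in H -> e x h -> e y h -> False.
Proof.
move=> xH yH f1H f2H f1_anti f2_anti xf1 f12 f2y nxf2 nxy nf1y dxy /blowupP [k hk] xh yh.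
have [c1 c1k ehc1] := nbr_nxt hk.
have [c2 [c3 [c4 [k0 k1 k2 k3 k4 e01 e12 e23 e34 e40]]]] := C5_through hk c1k ehc1.
have := common_nbr_patterns.
move=> /allP/(_ _ (mem_bits [:: e x c1; e x c2; e x c3; e x c4])).
move=> /allP/(_ _ (mem_bits [:: e y c1; e y c2; e y c3; e y c4])); apply/negP.
have a0 := f1_anti _ (mem_blowup k0); have a1 := f1_anti _ (mem_blowup k1).
have a2 := f1_anti _ (mem_blowup k2); have a3 := f1_anti _ (mem_blowup k3).
have a4 := f1_anti _ (mem_blowup k4).
have b0 := f2_anti _ (mem_blowup k0); have b1 := f2_anti _ (mem_blowup k1).
have b2 := f2_anti _ (mem_blowup k2); have b3 := f2_anti _ (mem_blowup k3).
have b4 := f2_anti _ (mem_blowup k4).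
have dxf2 : x != f2 by apply: contraNneq nxy => ->.
have dyf1 : y != f1 by apply: contraNneq nxy => ->.
apply: (@no_forbidden_pattern _ _ [:: h; c1; c2; c3; c4; x; y; f1; f2] h erefl).
- by rewrite /= !inE !negb_or; repeat (apply/andP; split); graph_fact.
- by move=> [|[|[|[|[|[|[|[|[|a]]]]]]]]] [|[|[|[|[|[|[|[|[|b]]]]]]]]] //= _ _;
     rewrite /C5_with /=; graph_fact.
Qed.

Section Component.
Variable v : T.
Hypotheses (v_out : v \notin H) (v_anti : forall u, u \in H -> ~~ e v u).

Definition A0 : {set T} := [set u | (u \notin H) && [forall w in H, ~~ e u w]].
Definition A0_edge : rel T := [rel a b | e a b && (a \in A0) && (b \in A0)].
Definition Z : {set T} := [set u | connect A0_edge v u].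
Definition N : {set T} := [set u | (u \notin Z) && [exists w in Z, e u w]].

Lemma v_in_Z : v \in Z.
Proof. by rewrite inE connect0. Qed.

Lemma Z_sub_A0 u : u \in Z -> u \in A0.
Proof.
have vA0 : v \in A0 by rewrite inE v_out; apply/forall_inP.
rewrite inE => /connectP [p + ->]; elim: p v vA0 => //= b p IH a _.
by case/andP => /andP [/andP [_ _] bA] /(IH b bA).
Qed.

Lemma Z_out u : u \in Z -> u \notin H.
Proof. by move/Z_sub_A0; rewrite inE => /andP []. Qed.

Lemma Z_anti u w : u \in Z -> w \in H -> ~~ e u w.
Proof. by move/Z_sub_A0; rewrite inE => /andP [_ /forall_inP]; apply. Qed.

Lemma Z_neq_H u w : u \in Z -> w \in H -> u != w.
Proof. by move=> /Z_out uH wH; apply: contraNneq uH => ->. Qed.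

Lemma N_out u : u \in N -> u \notin H.
Proof.
rewrite inE => /andP [_ /exists_inP [w wZ euw]].
by apply/negP => uH; move: (Z_anti wZ uH); rewrite e_sym euw.
Qed.

Lemma N_has_H_nbr u : u \in N -> exists2 h, h \in H & e u h.
Proof.
move=> uN; have uH := N_out uN; move: uN; rewrite inE => /andP [uZ /exists_inP [w wZ euw]].
have [/exists_inP [h hH euh]|no_nbr] := boolP [exists h in H, e u h]; first by exists h.
move: uZ; rewrite inE => /negP []; apply: (connect_trans (y := w)); first by rewrite -inE.
apply: connect1; rewrite /A0_edge /= e_sym euw (Z_sub_A0 wZ) inE uH /=.
by apply/forall_inP => h hH; apply: contra no_nbr => euh; apply/exists_inP; exists h.
Qed.

Lemma Z_closed a b : a \in Z -> e a b -> b \notin N -> b \in Z.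
Proof.
move=> aZ eab; rewrite inE negb_and negbK => /orP [//|/exists_inP []].
by exists a; rewrite // e_sym.
Qed.

Definition walk (x y : T) (f : nat -> T) (n : nat) :=
  [/\ f 0 = x, f n.+1 = y, (forall i, i <= n -> e (f i) (f i.+1)) &
      (forall i, 0 < i <= n -> f i \in Z)].

Lemma walk_exists x y : x \in N -> y \in N -> exists n f, walk x y f n.
Proof.
rewrite !inE => /andP [_ /exists_inP [zx zxZ exz]] /andP [_ /exists_inP [zy zyZ eyz]].
have /connectP [p pth zyE] : connect A0_edge zx zy.
  apply: (connect_trans (y := v)); last by rewrite -inE.
  by rewrite sym_connect_sym -?inE // => a b; rewrite /A0_edge /= e_sym andbAC.
pose W := zx :: p ++ [:: y].
exists (size p).+1, (fun i => nth x (x :: W) i); split => //.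
- by rewrite /W /= nth_cat ltnn subnn.
- have pW : path e x W.
    rewrite /W /= exz cat_path /= andbT -zyE e_sym eyz andbT.
    by apply: sub_path pth => a b /= /andP [/andP []].
  move=> i iN; move/(pathP x): pW => /(_ i).
  by rewrite /W /= size_cat /= addn1 ltnS => /(_ iN).
- move=> [//|i] /= iN.
  have -> : nth x W i = nth x (zx :: p) i by rewrite /W -cat_cons nth_cat /= iN.
  have /(path_connect pth) : nth x (zx :: p) i \in zx :: p by apply: mem_nth.
  by rewrite inE; apply: connect_trans; rewrite -inE.
Qed.

(* The shortcut of the walk through the chord [f i -- f k]. *)
Lemma walk_short x y f n i k : walk x y f n -> i.+1 < k -> k <= n.+1 -> e (f i) (f k) ->
  walk x y (fun t => if t <= i then f t else f (t + (k - i.+1))) (n - (k - i.+1)).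
Proof.
case=> f0 fn fe fz ik kn ef; split.
- by rewrite leq0n.
- have -> : ((n - (k - i.+1)).+1 <= i) = false by apply/negbTE; rewrite -ltnNge; lia.
  by rewrite (_ : (n - (k - i.+1)).+1 + (k - i.+1) = n.+1) //; lia.
- move=> t tn; case: (ltngtP t i) => [ti|ti|->].
  + by apply: fe; lia.
  + by rewrite addSn; apply: fe; lia.
  + by rewrite (_ : i.+1 + (k - i.+1) = k) //; lia.
- move=> t /andP [t0 tn]; case: (leqP t i) => ti.
  + by apply: fz; rewrite t0 /=; lia.
  + by apply: fz; apply/andP; split; lia.
Qed.

Record chordless_Zpath (n : nat) (f : nat -> T) : Prop := ChordlessZpath {
  Zpath_inner_nonempty : 0 < n;
  Zpath_edge : forall i, i <= n -> e (f i) (f i.+1);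
  Zpath_chord : forall i k, i.+1 < k -> k <= n.+1 -> ~~ e (f i) (f k);
  Zpath_inner : forall i, 0 < i <= n -> f i \in Z;
  Zpath_first : f 0 \in N;
  Zpath_last : f n.+1 \in N;
  Zpath_ends : f 0 != f n.+1 }.

Ltac Zpath_fact P := first
  [ graph_fact
  | by apply: (Zpath_edge P) | by rewrite e_sym; apply: (Zpath_edge P)
  | by apply: (Zpath_chord P) | by rewrite e_sym; apply: (Zpath_chord P)
  | by apply: Z_anti; [apply: (Zpath_inner P) | assumption]
  | by rewrite e_sym; apply: Z_anti; [apply: (Zpath_inner P) | assumption]
  | by apply: Z_neq_H; [apply: (Zpath_inner P) | assumption]
  | exact: (Zpath_ends P) ].

Lemma Zpath_long n f : chordless_Zpath n f -> 4 < n -> False.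
Proof.
move=> P n_big.
by apply: (no_P7 (a0:=f 0) (a1:=f 1) (a2:=f 2) (a3:=f 3) (a4:=f 4) (a5:=f 5) (a6:=f 6));
  first [by apply: (Zpath_edge P); lia | by apply: (Zpath_chord P); lia].
Qed.

Lemma Zpath_common_nbr n f h : chordless_Zpath n f -> n <= 4 ->
  h \in H -> e (f 0) h -> e (f n.+1) h -> False.
Proof.
case: n => [|[|[|[|[|n]]]]] P // _ hH xh yh; first by have := Zpath_inner_nonempty P.
- by apply: (no_C4 (a0:=f 0) (a1:=f 1) (a2:=f 2) (a3:=h)); Zpath_fact P.
- have [z1 z2] := (Zpath_inner P (isT : 0 < 1 <= 2), Zpath_inner P (isT : 0 < 2 <= 2)).
  apply: (no_common_nbr_across_P4 (N_out (Zpath_first P)) (N_out (Zpath_last P)) (Z_out z1)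
            (Z_out z2) (fun u => Z_anti z1) (fun u => Z_anti z2) _ _ _ _ _ _ _ hH xh yh);
  Zpath_fact P.
- by apply: (no_C6 (a0:=f 0) (a1:=f 1) (a2:=f 2) (a3:=f 3) (a4:=f 4) (a5:=h)); Zpath_fact P.
- by apply: (no_C7 (a0:=f 0) (a1:=f 1) (a2:=f 2) (a3:=f 3) (a4:=f 4) (a5:=f 5) (a6:=h));
    Zpath_fact P.
Qed.

Lemma Zpath_adjacent_nbrs n f h1 h2 : chordless_Zpath n f -> n <= 4 ->
  (forall h, h \in H -> ~~ (e (f 0) h && e (f n.+1) h)) ->
  h1 \in H -> h2 \in H -> e (f 0) h1 -> e (f n.+1) h2 -> e h1 h2 -> False.
Proof.
move=> P n_small no_common h1H h2H xh1 yh2 e12.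
have nxh2 : ~~ e (f 0) h2 by apply: contra (no_common _ h2H) => ->.
have nyh1 : ~~ e (f n.+1) h1 by apply: contra (no_common _ h1H) => ->; rewrite andbT.
move: n P n_small no_common yh2 nxh2 nyh1 => [|[|[|[|[|n]]]]] P // _ no_common yh2 nxh2 nyh1.
- by have := Zpath_inner_nonempty P.
- have z1 := Zpath_inner P (isT : 0 < 1 <= 1).
  have Pxy : outer_pair (f 0) (f 2) (f 1).
    split; rewrite ?(N_out (Zpath_first P)) ?(N_out (Zpath_last P)) ?(Z_out z1) //;
      by [move=> h; apply: Z_anti z1 | Zpath_fact P].
  exact: outer_pair_no_adjacent_nbrs Pxy h1H h2H xh1 yh2 e12.
- by apply: (no_C6 (a0:=f 0) (a1:=f 1) (a2:=f 2) (a3:=f 3) (a4:=h2) (a5:=h1)); Zpath_fact P.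
- by apply: (no_C7 (a0:=f 0) (a1:=f 1) (a2:=f 2) (a3:=f 3) (a4:=f 4) (a5:=h2) (a6:=h1));
    Zpath_fact P.
- by apply: (no_P7 (a0:=f 1) (a1:=f 2) (a2:=f 3) (a3:=f 4) (a4:=f 5) (a5:=h2) (a6:=h1));
    Zpath_fact P.
Qed.

Lemma Zpath_distant_nbrs n f hx m hy : chordless_Zpath n f -> n <= 4 ->
  hx \in H -> m \in H -> hy \in H -> e (f 0) hx -> e hx m -> e m hy -> e (f n.+1) hy ->
  ~~ e (f 0) m -> ~~ e (f 0) hy -> ~~ e (f n.+1) hx -> ~~ e (f n.+1) m -> ~~ e hx hy -> False.
Proof.
case: n => [|[|[|[|[|n]]]]] P // _ hxH mH hyH *; first by have := Zpath_inner_nonempty P.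
- by apply: (no_C6 (a0:=f 0) (a1:=f 1) (a2:=f 2) (a3:=hy) (a4:=m) (a5:=hx)); Zpath_fact P.
- by apply: (no_C7 (a0:=f 0) (a1:=f 1) (a2:=f 2) (a3:=f 3) (a4:=hy) (a5:=m) (a6:=hx));
    Zpath_fact P.
- by apply: (no_P7 (a0:=f 1) (a1:=f 2) (a2:=f 3) (a3:=f 4) (a4:=hy) (a5:=m) (a6:=hx));
    Zpath_fact P.
- by apply: (no_P7 (a0:=f 1) (a1:=f 2) (a2:=f 3) (a3:=f 4) (a4:=f 5) (a5:=hy) (a6:=m));
    Zpath_fact P.
Qed.

Lemma Zpath_false n f : chordless_Zpath n f -> False.
Proof.
move=> P; have [n_big|n_small] := ltnP 4 n; first exact: Zpath_long P n_big.
have [hx hxH xhx] := N_has_H_nbr (Zpath_first P).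
have [hy hyH yhy] := N_has_H_nbr (Zpath_last P).
have [/exists_inP [h hH /andP [xh yh]]|] := boolP [exists h in H, e (f 0) h && e (f n.+1) h].
  exact: Zpath_common_nbr P n_small hH xh yh.
move/exists_inPn => no_common.
have [/exists_inP [h1 h1H /exists_inP [h2 h2H /and3P [xh1 yh2 e12]]]|] :=
  boolP [exists h1 in H, exists h2 in H, [&& e (f 0) h1, e (f n.+1) h2 & e h1 h2]].
  exact: Zpath_adjacent_nbrs P n_small no_common h1H h2H xh1 yh2 e12.
move/exists_inPn => no_adj.
have nonadj h1 h2 : h1 \in H -> h2 \in H -> e (f 0) h1 -> e (f n.+1) h2 -> ~~ e h1 h2.
  by move=> h1H h2H xh1 yh2; move/exists_inPn: (no_adj _ h1H) => /(_ _ h2H); rewrite xh1 yh2.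
have no_nbr h : h \in H -> e (f 0) h -> ~~ e (f n.+1) h.
  by move=> hH xh; move: (no_common _ hH); rewrite xh.
case: (blowup_dist2 hxH hyH) => [Ehx|ehh|[m mH /andP [hxm mhy]]].
- by subst hy; move: (no_nbr _ hxH xhx); rewrite yhy.
- by move: (nonadj _ _ hxH hyH xhx yhy); rewrite ehh.
- apply: (Zpath_distant_nbrs P n_small hxH mH hyH xhx hxm mhy yhy).
  + by apply/negP => xm; move: (nonadj _ _ mH hyH xm yhy); rewrite mhy.
  + by apply/negP => xhy; move: (no_nbr _ hyH xhy); rewrite yhy.
  + exact: no_nbr _ hxH xhx.
  + by apply/negP => ym; move: (nonadj _ _ hxH mH xhx ym); rewrite hxm.
  + exact: nonadj _ _ hxH hyH xhx yhy.
Qed.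

Lemma no_walk n x y f : x \in N -> y \in N -> x != y -> ~~ e x y -> walk x y f n -> False.
Proof.
elim/ltn_ind: n x y f => n IH x y f xN yN dxy nxy W.
have chordless i k : i.+1 < k -> k <= n.+1 -> ~~ e (f i) (f k).
  move=> ik kn; apply/negP => ef.
  by apply: IH (walk_short W ik kn ef) => //; lia.
case: W => f0 fn fe fz; subst x y.
apply: (@Zpath_false n f); split => //.
by rewrite lt0n; apply: contraNneq nxy => n0; rewrite n0; exact: fe 0 (leq0n n).
Qed.

Lemma N_clique : is_clique e N.
Proof.
apply: cliqueP => u w uN wN uw; apply/negPn/negP => nuw.
have [n [f W]] := walk_exists uN wN.
exact: no_walk uN wN uw nuw W.
Qed.

Lemma last_path_Z a p : a \in Z ->
  path [rel x y | e x y && (x \notin N) && (y \notin N)] a p -> last a p \in Z.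
Proof.
elim: p a => //= b p IH a aZ /andP [/andP [/andP [eab _] bN] pth].
exact: IH (Z_closed aZ eab bN) pth.
Qed.

Lemma N_cutset : clique_cutset e N.
Proof.
split; first exact: N_clique.
have [b bB] := blowup_nonempty ord0; have bH := mem_blowup bB.
exists v, b; split.
- by rewrite inE v_in_Z.
- by apply: contraTN bH => /N_out.
- apply/negP => /connectP [p pth bE].
  by move: (Z_out (last_path_Z v_in_Z pth)); rewrite -bE bH.
Qed.

End Component.

End ForbiddenFree.

End NiceBlowup.

Theorem lemma5p5 (T : finType) (e : rel T) (B : 'I_5 -> {set T}) :
  simple_graph e ->
  basic e ->
  ~ has_induced e (@path_adj 7) ->
  ~ has_induced e (@cycle_adj 4) ->
  ~ has_induced e (@cycle_adj 6) ->
  ~ has_induced e (@cycle_adj 7) ->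
  maximal_nice_blowup e B ->
  forall v : T, v \notin blowup_vertices B ->
    exists2 u, u \in blowup_vertices B & e v u.
Proof.
move=> [e_irr e_sym] [_ _ _ no_cutset _] P7_free C4_free C6_free C7_free [B_nice B_max] v vH.
have [/exists_inP [u uH evu]|no_nbr] := boolP [exists u in blowup_vertices B, e v u].
  by exists u.
case: no_cutset; exists (N e B v).
apply: (N_cutset e_irr e_sym B_nice P7_free C4_free C6_free C7_free B_max vH).
by move=> u uH; apply: contra no_nbr => evu; apply/exists_inP; exists u.
Qed.
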